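(* Let $X, Y \subseteq \omega$, let $\mathcal{A}$ be a pca, let $a_\bot \neq a_\top$ be elements of $\mathcal{A}$, let $\gamma : \omega \to \mathcal{A}$ be a partial numbering, and let $d$ be a $Y$-computable $(a_\bot, a_\top)$-decider for $X$. If $\gamma$ has $Y$-c.e. inequivalence, then $X \le_T Y$.
   Context: A pca is a set with a partial binary application operation containing distinct $\mathrm{s},\mathrm{k}$ with $\mathrm{k}ab\downarrow=a$, $\mathrm{s}ab\downarrow$, $\mathrm{s}abc\simeq(ac)(bc)$. A partial numbering of $\mathcal{A}$ is a surjective partial function $\gamma:\omega\rightharpoonup\mathcal{A}$. $\gamma$ has $Y$-c.e. inequivalence if there is a $Y$-c.e. relation $R\subseteq\omega^2$ whose restriction to $\mathrm{dom}(\gamma)^2$ equals $\{(n,m)\in\mathrm{dom}(\gamma)^2:\gamma(n)\neq\gamma(m)\}$. A function $d:\omega\to\omega$ is an $(a_\bot,a_\top)$-decider for $X$ if for all $n$: $n\notin X\Rightarrow\gamma(d(n))=a_\bot$, and $n\in X\Rightarrow\gamma(d(n))=a_\top$. *)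

From Stdlib Require Import List Arith.
Import ListNotations.

(* Subsets of omega are represented by their characteristic functions nat -> bool. *)

Inductive rec : Type :=
| RZero : rec
| RSucc : rec
| RProj : nat -> rec
| ROrac : rec
| RComp : rec -> list rec -> rec
| RPrec : rec -> rec -> rec        (* primitive recursion on the first argument *)
| RMu   : rec -> rec.              (* minimisation on the first argument *)

Inductive eval (Y : nat -> bool) : rec -> list nat -> nat -> Prop :=
| eZero v : eval Y RZero v 0
| eSucc v : eval Y RSucc v (S (hd 0 v))
| eProj i v : eval Y (RProj i) v (nth i v 0)
| eOrac v : eval Y ROrac v (if Y (hd 0 v) then 1 else 0)
| eComp f gs v ws y : evals Y gs v ws -> eval Y f ws y -> eval Y (RComp f gs) v y
| ePrec0 f g v y : eval Y f v y -> eval Y (RPrec f g) (0 :: v) y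
| ePrecS f g n v r y :
    eval Y (RPrec f g) (n :: v) r -> eval Y g (n :: r :: v) y ->
    eval Y (RPrec f g) (S n :: v) y
| eMu f v n :
    eval Y f (n :: v) 0 ->
    (forall m, m < n -> exists k, eval Y f (m :: v) (S k)) ->
    eval Y (RMu f) v n
with evals (Y : nat -> bool) : list rec -> list nat -> list nat -> Prop :=
| esNil v : evals Y [] v []
| esCons g gs v w ws : eval Y g v w -> evals Y gs v ws -> evals Y (g :: gs) v (w :: ws).

Definition computable_in (Y : nat -> bool) (f : nat -> nat) : Prop :=
  exists p, forall n, eval Y p [n] (f n).

Definition turing_le (X Y : nat -> bool) : Prop :=
  computable_in Y (fun n => if X n then 1 else 0).

Definition ce_rel_in (Y : nat -> bool) (R : nat -> nat -> Prop) : Prop :=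
  exists p, forall n m, R n m <-> exists y, eval Y p [n; m] y.

Definition appo {A : Type} (app : A -> A -> option A) (x y : option A) : option A :=
  match x, y with Some a, Some b => app a b | _, _ => None end.

Record pca := {
  pca_car :> Type;
  pca_app : pca_car -> pca_car -> option pca_car;
  pca_s : pca_car;
  pca_k : pca_car;
  pca_sk : pca_s <> pca_k;
  pca_kax : forall a b,
      appo pca_app (appo pca_app (Some pca_k) (Some a)) (Some b) = Some a;
  pca_sdef : forall a b,
      appo pca_app (appo pca_app (Some pca_s) (Some a)) (Some b) <> None;
  pca_sax : forall a b c,
      appo pca_app (appo pca_app (appo pca_app (Some pca_s) (Some a)) (Some b)) (Some c)
      = appo pca_app (appo pca_app (Some a) (Some c)) (appo pca_app (Some b) (Some c))
}.

Definition partial_numbering (A : Type) (gamma : nat -> option A) : Prop :=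
  forall a : A, exists n, gamma n = Some a.

Definition ce_inequivalence_in (Y : nat -> bool) {A : Type} (gamma : nat -> option A) : Prop :=
  exists R : nat -> nat -> Prop, ce_rel_in Y R /\
    forall n m, gamma n <> None -> gamma m <> None ->
      (R n m <-> exists a b, gamma n = Some a /\ gamma m = Some b /\ a <> b).

Definition decider {A : Type} (gamma : nat -> option A) (abot atop : A)
    (X : nat -> bool) (d : nat -> nat) : Prop :=
  forall n, (X n = false -> gamma (d n) = Some abot) /\
            (X n = true -> gamma (d n) = Some atop).

From Stdlib Require Import List Arith Lia Bool ClassicalEpsilon.
Import ListNotations.

(* Let n_bot and n_top be indices of a_bot and a_top, and R the Y-c.e. inequivalence
   relation. Since gamma (d n) is a_top or a_bot according to n in X, we have n in X iff
   R (d n) n_bot, and n not in X iff R (d n) n_top; so X and its complement are both Y-c.e., and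
   X <=_T Y by (relativised) Post's theorem: search in parallel for one of the two halting
   computations.
   For mu-recursive programs such a parallel search needs step-bounded evaluation. Every program p
   is translated into a total program that, given a stage s, returns 0 ("no answer yet") or
   1 + the value of p, the stage bounding every unbounded search inside p. The translation is
   sound at every stage and complete from some stage on, so a single minimisation over stages
   performs the dovetailing. *)

Fixpoint eval_det Y p v y (H : eval Y p v y) {struct H} :
  forall y', eval Y p v y' -> y = y'
with evals_det Y gs v ws (H : evals Y gs v ws) {struct H} :
  forall ws', evals Y gs v ws' -> ws = ws'.
Proof.
  - destruct H as [| | | | f gs v ws y Hgs Hf | f g v y Hf | f g n v r y Hr Hg | f v n Hn Hlt];
      intros y' H'; inversion H' as [| | | | ? ? ? ws' ? Hgs' Hf' | ? ? ? ? Hf'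
        | ? ? ? ? r' ? Hr' Hg' | ? ? ? Hn' Hlt']; subst; try reflexivity.
    + apply (evals_det _ _ _ _ Hgs) in Hgs'; subst. exact (eval_det _ _ _ _ Hf _ Hf').
    + exact (eval_det _ _ _ _ Hf _ Hf').
    + apply (eval_det _ _ _ _ Hr) in Hr'; subst. exact (eval_det _ _ _ _ Hg _ Hg').
    + destruct (lt_eq_lt_dec n y') as [[Hny | Heq] | Hyn]; [| exact Heq |].
      * destruct (Hlt' n Hny) as [k Hk]. discriminate (eval_det _ _ _ _ Hn _ Hk).
      * destruct (Hlt y' Hyn) as [k Hk]. discriminate (eval_det _ _ _ _ Hk _ Hn').
  - destruct H as [| g gs v w ws Hw Hws]; intros ws' H'; inversion H' as [| ? ? ? w' ws'' Hw' Hws'];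
      subst; try reflexivity.
    f_equal; [exact (eval_det _ _ _ _ Hw _ Hw') | exact (evals_det _ _ _ _ Hws _ Hws')].
Qed.

Definition pred_prog : rec := RPrec RZero (RProj 0).
Definition ifz_prog : rec := RPrec (RProj 0) (RProj 3).
Definition predp (a : rec) : rec := RComp pred_prog [a].
Definition succp (a : rec) : rec := RComp RSucc [a].
Definition ifz (a b c : rec) : rec := RComp ifz_prog [a; b; c].
Definition projs (k L : nat) : list rec := map RProj (seq k L).
Fixpoint constp (k : nat) : rec := match k with 0 => RZero | S k => succp (constp k) end.

Lemma eval_predp Y a u x : eval Y a u x -> eval Y (predp a) u (pred x).
Proof.
  intros Ha. eapply eComp; [repeat constructor; exact Ha | clear Ha].
  induction x as [| x IH]; [apply ePrec0; constructor |].
  eapply ePrecS; [exact IH | apply (eProj Y 0 [x; pred x])].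
Qed.

Lemma eval_succp Y a u x : eval Y a u x -> eval Y (succp a) u (S x).
Proof. intros Ha. eapply eComp; [repeat constructor; exact Ha | apply eSucc]. Qed.

Lemma eval_ifz Y a b c u x y z : eval Y a u x -> eval Y b u y -> eval Y c u z ->
  eval Y (ifz a b c) u (match x with 0 => y | S _ => z end).
Proof.
  intros Ha Hb Hc. eapply eComp; [repeat constructor; eauto | clear Ha Hb Hc].
  induction x as [| x IH]; [apply ePrec0, (eProj Y 0 [y; z]) |].
  eapply ePrecS; [exact IH | apply (eProj Y 3)].
Qed.

Lemma eval_constp Y k u : eval Y (constp k) u k.
Proof. induction k; [constructor | apply eval_succp; assumption]. Qed.

Lemma evals_projs Y pre v : evals Y (projs (length pre) (length v)) (pre ++ v) v.
Proof.
  revert pre; induction v as [| x v IH]; intros pre; [constructor |].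
  simpl; constructor.
  - replace x with (nth (length pre) (pre ++ x :: v) 0) at 2
      by (rewrite app_nth2, Nat.sub_diag by lia; reflexivity).
    constructor.
  - specialize (IH (pre ++ [x])). rewrite <- app_assoc, length_app, Nat.add_1_r in IH. exact IH.
Qed.

Lemma evals_projs_len Y pre v k L : length pre = k -> length v = L ->
  evals Y (projs k L) (pre ++ v) v.
Proof. intros <- <-; apply evals_projs. Qed.

Lemma evals_map_predp Y gs u xs : evals Y gs u xs -> evals Y (map predp gs) u (map pred xs).
Proof. induction 1; constructor; [apply eval_predp |]; assumption. Qed.

Lemma eval_guard Y u inner z gs xs : evals Y gs u xs -> eval Y inner u z ->
  eval Y (fold_right (fun g acc => ifz g RZero acc) inner gs) u
    (if existsb (Nat.eqb 0) xs then 0 else z).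
Proof.
  intros Hgs Hinner; induction Hgs as [| g gs u x xs Hg _ IH]; [exact Hinner |].
  pose proof (eval_ifz Y _ _ _ u _ 0 _ Hg (eZero _ _) (IH Hinner)) as H.
  destruct x; exact H.
Qed.

Fixpoint rec_nested_ind (P : rec -> Prop) (H0 : P RZero) (H1 : P RSucc)
  (H2 : forall i, P (RProj i)) (H3 : P ROrac)
  (H4 : forall f gs, P f -> Forall P gs -> P (RComp f gs))
  (H5 : forall f g, P f -> P g -> P (RPrec f g)) (H6 : forall f, P f -> P (RMu f))
  (p : rec) : P p :=
  let IH := rec_nested_ind P H0 H1 H2 H3 H4 H5 H6 in
  match p with
  | RZero => H0
  | RSucc => H1
  | RProj i => H2 i
  | ROrac => H3
  | RComp f gs => H4 f gs (IH f)
      ((fix all (l : list rec) : Forall P l :=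
          match l with [] => Forall_nil _ | g :: l' => Forall_cons _ (IH g) (all l') end) gs)
  | RPrec f g => H5 f g (IH f) (IH g)
  | RMu f => H6 f (IH f)
  end.

(* [h i] is the staged value of the minimised body at argument [i]: 0 means no answer yet, 1 means
   value 0, larger means a nonzero value. Scanning [0, c), [search h c] is 0 while every value seen
   is nonzero, 1 once some argument has no answer yet, and [2 + m] once [m] has value 0. *)
Fixpoint search (h : nat -> nat) (c : nat) : nat :=
  match c with
  | 0 => 0
  | S c => match search h c with
           | 0 => match h c with 0 => 1 | 1 => S (S c) | _ => 0 end
           | r => r
           end
  end.

Lemma search_zero h c : search h c = 0 -> forall m, m < c -> 2 <= h m.
Proof.
  induction c as [| c IH]; simpl; intros Hc m Hm; [lia |].
  destruct (search h c); [| discriminate].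
  destruct (h c) as [| [| k]] eqn:Ehc; try discriminate.
  destruct (Nat.eq_dec m c) as [-> | ]; [lia | apply IH; auto; lia].
Qed.

Lemma search_sound h c : search h c = 0 \/ search h c = 1 \/
  exists m, search h c = S (S m) /\ h m = 1 /\ forall m', m' < m -> 2 <= h m'.
Proof.
  induction c as [| c IH]; simpl; [left; reflexivity |].
  destruct (search h c) eqn:Ec; [| exact IH].
  destruct (h c) as [| [| k]] eqn:Ehc; [right; left; reflexivity | | left; reflexivity].
  right; right; exists c; split; [| split]; eauto using search_zero.
Qed.

Lemma search_complete h n c : h n = 1 -> (forall m, m < n -> 2 <= h m) -> n < c ->
  search h c = S (S n).
Proof.
  intros Hn Hlt.
  assert (Hbefore : forall k, k <= n -> search h k = 0).
  { induction k as [| k IH]; simpl; intros; auto. rewrite IH by lia.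
    specialize (Hlt k ltac:(lia)). destruct (h k) as [| [| j]]; lia. }
  induction c as [| c IH]; intros Hc; [lia |]. simpl.
  destruct (Nat.eq_dec c n) as [-> | ].
  - rewrite Hbefore, Hn by lia; reflexivity.
  - rewrite IH by lia; reflexivity.
Qed.

Definition staged_comp (tf : rec) (tgs : list rec) : rec :=
  fold_right (fun tg acc => ifz tg RZero acc) (RComp tf (RProj 0 :: map predp tgs)) tgs.

Definition staged_prec_step (tg : rec) (L : nat) : rec :=
  ifz (RProj 1) RZero (RComp tg (RProj 2 :: RProj 0 :: predp (RProj 1) :: projs 3 L)).

Definition staged_prec (tf tg : rec) (L : nat) : rec :=
  RComp (RPrec tf (staged_prec_step tg L)) (RProj 1 :: RProj 0 :: projs 2 L).

Definition staged_mu_query (tf : rec) (L : nat) : rec :=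
  RComp tf (RProj 2 :: RProj 0 :: projs 3 L).

Definition staged_mu_step (tf : rec) (L : nat) : rec :=
  ifz (RProj 1)
    (ifz (staged_mu_query tf L) (constp 1)
       (ifz (predp (staged_mu_query tf L)) (succp (succp (RProj 0))) RZero))
    (RProj 1).

Definition staged_mu (tf : rec) (L : nat) : rec :=
  predp (RComp (RPrec RZero (staged_mu_step tf L)) (RProj 0 :: RProj 0 :: projs 1 L)).

(* [staged p L] runs on [s :: v] with [length v = L] (the arity is needed to reorder arguments)
   and returns 0 or [1 + y] with [eval Y p v y]; at stage [s] minimisation inspects only the
   arguments below [s]. *)
Fixpoint staged (p : rec) (L : nat) : rec :=
  match p with
  | RZero => succp RZero
  | RSucc => succp (succp (RProj 1))
  | RProj i => succp (RProj (S i))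
  | ROrac => succp (RComp ROrac [RProj 1])
  | RComp f gs => staged_comp (staged f (length gs)) (map (fun g => staged g L) gs)
  | RPrec f g =>
      match L with 0 => RZero | S L' => staged_prec (staged f L') (staged g (S (S L'))) L' end
  | RMu f => staged_mu (staged f (S L)) L
  end.

Lemma eval_staged_mu Y tf L s v h : length v = L ->
  (forall i, eval Y tf (s :: i :: v) (h i)) ->
  eval Y (staged_mu tf L) (s :: v) (pred (search h s)).
Proof.
  intros Hl Hh.
  assert (Hiter : forall c, eval Y (RPrec RZero (staged_mu_step tf L)) (c :: s :: v) (search h c)).
  { induction c as [| c IH]; [apply ePrec0; constructor |].
    eapply ePrecS; [exact IH |].
    assert (Hq : eval Y (staged_mu_query tf L) (c :: search h c :: s :: v) (h c)).
    { eapply eComp; [| apply Hh].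
      repeat apply esCons; [apply (eProj Y 2) | apply (eProj Y 0) |].
      apply (evals_projs_len Y [c; search h c; s]); auto. }
    pose proof (eval_ifz Y _ _ _ _ _ _ _ (eProj Y 1 _)
      (eval_ifz Y _ _ _ _ _ _ _ Hq (eval_constp Y 1 _)
         (eval_ifz Y _ _ _ _ _ _ _ (eval_predp Y _ _ _ Hq)
            (eval_succp Y _ _ _ (eval_succp Y _ _ _ (eProj Y 0 _))) (eZero _ _)))
      (eProj Y 1 _)) as H.
    simpl in H |- *. destruct (search h c); [| exact H].
    destruct (h c) as [| [| k]]; exact H. }
  apply eval_predp. eapply eComp; [| apply Hiter].
  repeat apply esCons; [apply (eProj Y 0) | apply (eProj Y 0) |].
  apply (evals_projs_len Y [s]); auto.
Qed.

Definition approx (Y : nat -> bool) (p : rec) (v : list nat) (y : nat) : Prop :=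
  y = 0 \/ exists y', y = S y' /\ eval Y p v y'.

Definition staged_sound (Y : nat -> bool) (p : rec) : Prop := forall L s v, length v = L ->
  exists y, eval Y (staged p L) (s :: v) y /\ approx Y p v y.

Lemma evals_of_approx Y gs v xs : Forall2 (fun g x => approx Y g v x) gs xs ->
  existsb (Nat.eqb 0) xs = false -> evals Y gs v (map pred xs).
Proof.
  induction 1 as [| g x gs xs Hx _ IH]; simpl; intros H0; [constructor |].
  apply orb_false_iff in H0 as [Hx0 Hxs0].
  destruct Hx as [-> | (y & -> & Hy)]; [discriminate | constructor; auto].
Qed.

Lemma staged_comp_sound Y f gs : staged_sound Y f -> Forall (staged_sound Y) gs ->
  staged_sound Y (RComp f gs).
Proof.
  intros Hf Hgs L s v Hl.
  assert (Hxs : exists xs, evals Y (map (fun g => staged g L) gs) (s :: v) xs /\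
                  Forall2 (fun g x => approx Y g v x) gs xs).
  { induction Hgs as [| g gs Hg _ IH]; [exists []; split; constructor |].
    destruct IH as (xs & Hev & Hap). destruct (Hg L s v Hl) as (x & Hx & Hax).
    exists (x :: xs); split; constructor; assumption. }
  destruct Hxs as (xs & Hev & Hap).
  assert (Hlen : length (map pred xs) = length gs)
    by (rewrite length_map; symmetry; eapply Forall2_length; eauto).
  destruct (Hf _ s _ Hlen) as (z & Hz & Haz).
  eexists; split.
  - apply (eval_guard _ _ _ z _ _ Hev).
    eapply eComp; [| exact Hz]. constructor; [apply (eProj Y 0) | apply evals_map_predp, Hev].
  - destruct (existsb (Nat.eqb 0) xs) eqn:E0; [left; reflexivity |].
    destruct Haz as [-> | (y & -> & Hy)]; [left; reflexivity |].
    right; exists y; split; [reflexivity |].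
    eapply eComp; [apply evals_of_approx |]; eassumption.
Qed.

Lemma eval_staged_prec_step Y tg L s n r v z : length v = L ->
  eval Y tg (s :: n :: pred r :: v) z ->
  eval Y (staged_prec_step tg L) (n :: r :: s :: v) (match r with 0 => 0 | S _ => z end).
Proof.
  intros Hl Hz. apply (eval_ifz Y _ _ _ _ _ _ _ (eProj Y 1 (n :: r :: s :: v)) (eZero _ _)).
  eapply eComp; [| exact Hz].
  repeat apply esCons; [apply (eProj Y 2) | apply (eProj Y 0) | apply eval_predp, (eProj Y 1) |].
  apply (evals_projs_len Y [n; r; s]); auto.
Qed.

Lemma evals_staged_prec_args Y L s n v : length v = L ->
  evals Y (RProj 1 :: RProj 0 :: projs 2 L) (s :: n :: v) (n :: s :: v).
Proof.
  intros Hl; repeat apply esCons; [apply (eProj Y 1) | apply (eProj Y 0) |].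
  apply (evals_projs_len Y [s; n]); auto.
Qed.

Lemma eval_staged_prec Y tf tg L s n v r : length v = L ->
  eval Y (RPrec tf (staged_prec_step tg L)) (n :: s :: v) r ->
  eval Y (staged_prec tf tg L) (s :: n :: v) r.
Proof. intros Hl Hr; exact (eComp _ _ _ _ _ _ (evals_staged_prec_args Y L s n v Hl) Hr). Qed.

Lemma staged_prec_sound Y f g : staged_sound Y f -> staged_sound Y g ->
  staged_sound Y (RPrec f g).
Proof.
  intros Hf Hg [| L] s v Hl; [exists 0; split; [constructor | left; reflexivity] |].
  destruct v as [| n v]; [discriminate | injection Hl as Hl].
  assert (Hiter : forall k, exists r,
    eval Y (RPrec (staged f L) (staged_prec_step (staged g (S (S L))) L)) (k :: s :: v) r /\
    approx Y (RPrec f g) (k :: v) r).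
  { induction k as [| k IH].
    - destruct (Hf L s v Hl) as (y & Hy & Hay). exists y; split; [apply ePrec0, Hy |].
      destruct Hay as [-> | (y' & -> & Hy')]; [left | right; exists y'; split; [| apply ePrec0]];
        auto.
    - destruct IH as (r & Hr & Har).
      destruct (Hg (S (S L)) s (k :: pred r :: v) ltac:(simpl; lia)) as (z & Hz & Haz).
      exists (match r with 0 => 0 | S _ => z end); split.
      + eapply ePrecS; [exact Hr | apply eval_staged_prec_step; assumption].
      + destruct Har as [-> | (r' & -> & Hr')]; [left; reflexivity |].
        destruct Haz as [-> | (y & -> & Hy)]; [left; reflexivity |].
        right; exists y; split; [reflexivity | eapply ePrecS; eassumption]. }
  destruct (Hiter n) as (r & Hr & Har). exists r; split; [apply eval_staged_prec |]; assumption.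
Qed.

Lemma staged_mu_sound Y f : staged_sound Y f -> staged_sound Y (RMu f).
Proof.
  intros Hf L s v Hl.
  destruct (choice (fun i x => eval Y (staged f (S L)) (s :: i :: v) x /\ approx Y f (i :: v) x))
    as [h Hh].
  { intros i; apply Hf; simpl; lia. }
  eexists; split; [apply (eval_staged_mu Y _ L s v h Hl); intros i; apply Hh |].
  destruct (search_sound h s) as [-> | [-> | (m & -> & Hm & Hlt)]]; [left; reflexivity.. |].
  right; exists m; split; [reflexivity | apply eMu].
  - destruct (proj2 (Hh m)) as [H0 | (y & Hy & Hev)]; [lia |].
    rewrite Hm in Hy; injection Hy as <-; exact Hev.
  - intros m' Hm'. specialize (Hlt m' Hm').
    destruct (proj2 (Hh m')) as [H0 | ([| k] & Hy & Hev)]; [lia | lia | exists k; exact Hev].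
Qed.

Lemma all_staged_sound Y p : staged_sound Y p.
Proof.
  induction p as [| | i | | f gs | f g | f] using rec_nested_ind;
    auto using staged_comp_sound, staged_prec_sound, staged_mu_sound;
    intros L s v _; eexists; (split; [| right; eexists; split; [reflexivity |]]).
  - apply eval_succp; constructor.
  - constructor.
  - apply eval_succp, eval_succp, (eProj Y 1).
  - destruct v; constructor.
  - apply eval_succp, (eProj Y (S i)).
  - exact (eProj Y i v).
  - apply eval_succp. eapply eComp; [apply esCons; [apply (eProj Y 1) | apply esNil] | apply eOrac].
  - destruct v; exact (eOrac Y _).
Qed.

Definition eventually (P : nat -> Prop) : Prop := exists s0, forall s, s0 <= s -> P s.

Lemma eventually_mono (P Q : nat -> Prop) : (forall s, P s -> Q s) ->
  eventually P -> eventually Q.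
Proof. intros HPQ [s0 Hs0]; exists s0; auto. Qed.

Lemma eventually_and (P Q : nat -> Prop) : eventually P -> eventually Q ->
  eventually (fun s => P s /\ Q s).
Proof. intros [s0 Hs0] [s1 Hs1]; exists (max s0 s1); split; [apply Hs0 | apply Hs1]; lia. Qed.

Lemma eventually_gt n : eventually (fun s => n < s).
Proof. exists (S n); lia. Qed.

Lemma eventually_forall_lt (P : nat -> nat -> Prop) n :
  (forall m, m < n -> eventually (P m)) -> eventually (fun s => forall m, m < n -> P m s).
Proof.
  induction n as [| n IH]; intros HP; [exists 0; lia |].
  destruct (eventually_and _ _ (IH ltac:(auto)) (HP n ltac:(lia))) as [s0 Hs0].
  exists s0; intros s Hs m Hm.
  destruct (Nat.eq_dec m n) as [-> | ]; apply Hs0; auto; lia.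
Qed.

Lemma evals_length Y gs v ws : evals Y gs v ws -> length ws = length gs.
Proof. induction 1; simpl; auto. Qed.

Lemma existsb_eqb0_map_S ws : existsb (Nat.eqb 0) (map S ws) = false.
Proof. induction ws; [reflexivity | exact IHws]. Qed.

Lemma eval_staged_comp_halted Y f gs L s v ws y :
  evals Y (map (fun g => staged g L) gs) (s :: v) (map S ws) ->
  eval Y (staged f (length gs)) (s :: ws) (S y) ->
  eval Y (staged (RComp f gs) L) (s :: v) (S y).
Proof.
  intros Hgs Hf.
  assert (Hinner : eval Y (RComp (staged f (length gs)) (RProj 0 :: map predp
                     (map (fun g => staged g L) gs))) (s :: v) (S y)).
  { eapply eComp; [| exact Hf]. constructor; [apply (eProj Y 0) |].
    replace ws with (map pred (map S ws)) by (rewrite map_map; apply map_id).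
    apply evals_map_predp, Hgs. }
  pose proof (eval_guard _ _ _ _ _ _ Hgs Hinner) as H.
  rewrite existsb_eqb0_map_S in H; exact H.
Qed.

Lemma eval_staged_prec_inv Y tf tg L s n v r : length v = L ->
  eval Y (staged_prec tf tg L) (s :: n :: v) r ->
  eval Y (RPrec tf (staged_prec_step tg L)) (n :: s :: v) r.
Proof.
  intros Hl H; inversion H as [| | | | ? ? ? ws ? Hws Hr | | |]; subst.
  rewrite <- (evals_det _ _ _ _ (evals_staged_prec_args Y _ s n v eq_refl) _ Hws) in Hr.
  exact Hr.
Qed.

Lemma eval_staged_prec_succ Y f g L s n v r y : length v = L ->
  eval Y (staged (RPrec f g) (S L)) (s :: n :: v) (S r) ->
  eval Y (staged g (S (S L))) (s :: n :: r :: v) (S y) ->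
  eval Y (staged (RPrec f g) (S L)) (s :: S n :: v) (S y).
Proof.
  simpl; intros Hl Hr Hy. apply eval_staged_prec; [exact Hl |].
  eapply ePrecS; [apply (eval_staged_prec_inv _ _ _ _ _ _ _ _ Hl Hr) |].
  exact (eval_staged_prec_step Y _ L s n (S r) v (S y) Hl Hy).
Qed.

Lemma eval_staged_mu_halted Y f L s v n : length v = L -> n < s ->
  eval Y (staged f (S L)) (s :: n :: v) 1 ->
  (forall m, m < n -> exists k, eval Y (staged f (S L)) (s :: m :: v) (S (S k))) ->
  eval Y (staged (RMu f) L) (s :: v) (S n).
Proof.
  intros Hl Hns Hn Hlt.
  destruct (choice (fun i x => eval Y (staged f (S L)) (s :: i :: v) x)) as [h Hh].
  { intros i. destruct (all_staged_sound Y f (S L) s (i :: v)) as (x & Hx & _);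
      [simpl; lia | eauto]. }
  pose proof (eval_staged_mu Y _ L s v h Hl Hh) as H.
  rewrite (search_complete h n s) in H; [exact H | | | exact Hns].
  - exact (eval_det _ _ _ _ (Hh n) _ Hn).
  - intros m Hm. destruct (Hlt m Hm) as [k Hk].
    rewrite (eval_det _ _ _ _ (Hh m) _ Hk); lia.
Qed.

Lemma staged_mu_complete Y f L v n : length v = L ->
  eventually (fun s => eval Y (staged f (S L)) (s :: n :: v) 1) ->
  (forall m, m < n -> eventually (fun s =>
     exists k, eval Y (staged f (S L)) (s :: m :: v) (S (S k)))) ->
  eventually (fun s => eval Y (staged (RMu f) L) (s :: v) (S n)).
Proof.
  intros Hl Hn Hlt.
  refine (eventually_mono _ _ _ (eventually_and _ _ (eventually_gt n)
            (eventually_and _ _ Hn (eventually_forall_lt _ n Hlt)))).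
  intros s (Hns & Hsn & Hslt); exact (eval_staged_mu_halted Y f L s v n Hl Hns Hsn Hslt).
Qed.

Fixpoint staged_complete Y p v y (H : eval Y p v y) {struct H} :
  forall L, length v = L -> eventually (fun s => eval Y (staged p L) (s :: v) (S y))
with staged_complete_list Y gs v ws (H : evals Y gs v ws) {struct H} :
  forall L, length v = L ->
  eventually (fun s => evals Y (map (fun g => staged g L) gs) (s :: v) (map S ws)).
Proof.
  - destruct H as [v | v | i v | v | f gs v ws y Hgs Hf | f g v y Hf | f g n v r y Hr Hg
                  | f v n Hn Hlt]; intros L Hl.
    + exists 0; intros s _; apply eval_succp; constructor.
    + exists 0; intros s _; destruct v; apply eval_succp, eval_succp, (eProj Y 1).
    + exists 0; intros s _; apply eval_succp, (eProj Y (S i)).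
    + exists 0; intros s _; apply eval_succp.
      destruct v; (eapply eComp; [apply esCons; [apply (eProj Y 1) | apply esNil] |]);
        exact (eOrac Y _).
    + refine (eventually_mono _ _ _ (eventually_and _ _
        (staged_complete_list _ _ _ _ Hgs L Hl)
        (staged_complete _ _ _ _ Hf _ (evals_length _ _ _ _ Hgs)))).
      intros s [Hs1 Hs2]; exact (eval_staged_comp_halted _ _ _ _ _ _ _ _ Hs1 Hs2).
    + destruct L as [| L]; [discriminate | injection Hl as Hl].
      refine (eventually_mono _ _ _ (staged_complete _ _ _ _ Hf L Hl)).
      intros s Hs; exact (eval_staged_prec _ _ _ _ _ _ _ _ Hl (ePrec0 _ _ _ _ _ Hs)).
    + destruct L as [| L]; [discriminate | injection Hl as Hl].
      refine (eventually_mono _ _ _ (eventually_and _ _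
        (staged_complete _ _ _ _ Hr (S L) ltac:(simpl; lia))
        (staged_complete _ _ _ _ Hg (S (S L)) ltac:(simpl; lia)))).
      intros s [Hs1 Hs2]; exact (eval_staged_prec_succ _ _ _ _ _ _ _ _ _ Hl Hs1 Hs2).
    + apply staged_mu_complete;
        [exact Hl | exact (staged_complete _ _ _ _ Hn (S L) ltac:(simpl; lia)) |].
      intros m Hm. destruct (Hlt m Hm) as [k Hk].
      refine (eventually_mono _ _ _ (staged_complete _ _ _ _ Hk (S L) ltac:(simpl; lia))).
      intros s Hs; exists k; exact Hs.
  - destruct H as [v | g gs v w ws Hw Hws]; intros L Hl; [exists 0; intros; constructor |].
    refine (eventually_mono _ _ _ (eventually_and _ _
      (staged_complete _ _ _ _ Hw L Hl) (staged_complete_list _ _ _ _ Hws L Hl))).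
    intros s [Hs1 Hs2]; constructor; assumption.
Qed.

Lemma staged_fun Y p L v : length v = L ->
  exists h, forall s, eval Y (staged p L) (s :: v) (h s) /\ approx Y p v (h s).
Proof.
  intros Hl; apply (choice (fun s x => eval Y (staged p L) (s :: v) x /\ approx Y p v x)).
  intros s; exact (all_staged_sound Y p L s v Hl).
Qed.

Lemma staged_fun_halted Y p L v y h : eval Y p v y -> length v = L ->
  (forall s, eval Y (staged p L) (s :: v) (h s)) -> exists s, h s = S y.
Proof.
  intros Hy Hl Hh. destruct (staged_complete _ _ _ _ Hy L Hl) as [s Hs].
  exists s; exact (eval_det _ _ _ _ (Hh s) _ (Hs s (le_n s))).
Qed.

Lemma eval_mu_total Y f v h : (forall s, eval Y f (s :: v) (h s)) -> (exists s, h s = 0) ->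
  exists m, h m = 0 /\ eval Y (RMu f) v m.
Proof.
  intros Hh Hex.
  destruct (dec_inh_nat_subset_has_unique_least_element (fun s => h s = 0))
    as (m & [Hm Hleast] & _); [intros s; destruct (h s); auto | exact Hex |].
  exists m; split; [exact Hm | apply eMu; [rewrite <- Hm; apply Hh |]].
  intros k Hk. destruct (h k) as [| j] eqn:Ek; [apply Hleast in Ek; lia |].
  exists j; rewrite <- Ek; apply Hh.
Qed.

Definition ce_in (Y : nat -> bool) (P : nat -> Prop) : Prop :=
  exists p, forall n, P n <-> exists y, eval Y p [n] y.

Lemma ce_in_ext Y (P Q : nat -> Prop) : (forall n, P n <-> Q n) -> ce_in Y P -> ce_in Y Q.
Proof. intros HPQ [p Hp]; exists p; intros n; rewrite <- HPQ; apply Hp. Qed.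

Lemma ce_in_section Y R f c : ce_rel_in Y R -> computable_in Y f ->
  ce_in Y (fun n => R (f n) c).
Proof.
  intros [p Hp] [fp Hf].
  exists (RComp p [RComp fp [RProj 0]; constp c]); intros n.
  assert (Hargs : evals Y [RComp fp [RProj 0]; constp c] [n] [f n; c]).
  { repeat constructor; [eapply eComp; [repeat constructor | apply Hf] | apply eval_constp]. }
  rewrite Hp; split; intros [y Hy]; exists y.
  - eapply eComp; eassumption.
  - inversion Hy as [| | | | ? ? ? ws ? Hws Hp' | | |]; subst.
    rewrite (evals_det _ _ _ _ Hargs _ Hws); exact Hp'.
Qed.

Theorem turing_le_of_ce_complement X Y :
  ce_in Y (fun n => X n = true) -> ce_in Y (fun n => X n = false) -> turing_le X Y.
Proof.
  intros [p1 Hp1] [p2 Hp2].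
  set (halted := ifz (staged p1 1) (ifz (staged p2 1) (constp 1) RZero) RZero).
  exists (ifz (RComp (staged p1 1) [RMu halted; RProj 0]) RZero (constp 1)); intros n.
  destruct (staged_fun Y p1 1 [n] eq_refl) as [h1 Hh1].
  destruct (staged_fun Y p2 1 [n] eq_refl) as [h2 Hh2].
  set (z s := match h1 s with 0 => match h2 s with 0 => 1 | _ => 0 end | _ => 0 end).
  assert (Hz : forall s, eval Y halted [s; n] (z s)).
  { intros s; apply eval_ifz; [apply Hh1 | apply eval_ifz | constructor];
      [apply Hh2 | apply eval_constp | constructor]. }
  assert (Hstop : exists s, z s = 0).
  { destruct (X n) eqn:Xn.
    - destruct (proj1 (Hp1 n) Xn) as [y Hy].
      destruct (staged_fun_halted _ _ _ _ _ _ Hy eq_refl (fun s => proj1 (Hh1 s))) as [s Hs].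
      exists s; unfold z; rewrite Hs; reflexivity.
    - destruct (proj1 (Hp2 n) Xn) as [y Hy].
      destruct (staged_fun_halted _ _ _ _ _ _ Hy eq_refl (fun s => proj1 (Hh2 s))) as [s Hs].
      exists s; unfold z; rewrite Hs; destruct (h1 s); reflexivity. }
  destruct (eval_mu_total _ _ _ _ Hz Hstop) as (m & Hm & Hmu).
  assert (Hout : eval Y (RComp (staged p1 1) [RMu halted; RProj 0]) [n] (h1 m)).
  { eapply eComp; [exact (esCons _ _ _ _ _ _ Hmu (esCons _ _ _ _ _ _ (eProj Y 0 _) (esNil _ _))) |].
    apply Hh1. }
  replace (if X n then 1 else 0) with (match h1 m with 0 => 0 | S _ => 1 end).
  { exact (eval_ifz _ _ _ _ _ _ _ _ Hout (eZero _ _) (eval_constp Y 1 _)). }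
  destruct (proj2 (Hh1 m)) as [H1 | (y & H1 & Hy)]; rewrite H1.
  - unfold z in Hm; rewrite H1 in Hm.
    destruct (proj2 (Hh2 m)) as [H2 | (y & H2 & Hy)]; [rewrite H2 in Hm; discriminate |].
    rewrite (proj2 (Hp2 n) (ex_intro _ y Hy)); reflexivity.
  - rewrite (proj2 (Hp1 n) (ex_intro _ y Hy)); reflexivity.
Qed.

Lemma decider_value A (gamma : nat -> option A) abot atop X d n :
  decider gamma abot atop X d -> gamma (d n) = Some (if X n then atop else abot).
Proof. intros Hdec; destruct (Hdec n) as [Hf Ht]; destruct (X n); auto. Qed.

Lemma decider_inequivalent A (gamma : nat -> option A) abot atop X d
    (R : nat -> nat -> Prop) n m a :
  decider gamma abot atop X d ->
  (forall n m, gamma n <> None -> gamma m <> None ->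
     (R n m <-> exists a b, gamma n = Some a /\ gamma m = Some b /\ a <> b)) ->
  gamma m = Some a -> (R (d n) m <-> (if X n then atop else abot) <> a).
Proof.
  intros Hdec HR Hm. pose proof (decider_value _ _ _ _ _ _ n Hdec) as Hdn.
  rewrite HR by congruence; split.
  - intros (a' & b & Ha' & Hb & Hab); congruence.
  - intros Hne; exists (if X n then atop else abot), a; auto.
Qed.

Theorem theorem3p7 (X Y : nat -> bool) (A : pca) (abot atop : A)
  (gamma : nat -> option A) (d : nat -> nat) :
  abot <> atop ->
  partial_numbering A gamma ->
  computable_in Y d ->
  decider gamma abot atop X d ->
  ce_inequivalence_in Y gamma ->
  turing_le X Y.
Proof.
  intros Hne Hpn Hd Hdec [R [HRce HR]].
  destruct (Hpn abot) as [nbot Hbot], (Hpn atop) as [ntop Htop].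
  apply turing_le_of_ce_complement.
  - apply (ce_in_ext _ (fun n => R (d n) nbot)); [| exact (ce_in_section _ _ _ _ HRce Hd)].
    intros n; rewrite (decider_inequivalent _ _ _ _ _ _ _ n _ _ Hdec HR Hbot).
    destruct (X n); split; congruence.
  - apply (ce_in_ext _ (fun n => R (d n) ntop)); [| exact (ce_in_section _ _ _ _ HRce Hd)].
    intros n; rewrite (decider_inequivalent _ _ _ _ _ _ _ n _ _ Hdec HR Htop).
    destruct (X n); split; congruence.
Qed.
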